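(* Let $n\ge 2$. For $\vec{x}=(x_1,\dots,x_n)\in\{0,1\}^n$ and $\vec{a}=(a_1,\dots,a_n)\in\{0,1\}^n$, define the $n$-partite Popescu–Rohrlich box $P^{PR}_n(\vec a\mid\vec x)=2^{-(n-1)}$ if $\bigoplus_i a_i=\prod_i x_i$ and $0$ otherwise, the even-parity box $P^c_n(\vec a\mid \vec x)=2^{-(n-1)}$ if $\bigoplus_i a_i=0$ and $0$ otherwise, and for $0\le\varepsilon\le 1$ the correlated non-local box $P^{PR}_{n,\varepsilon}=\varepsilon P^{PR}_n+(1-\varepsilon)P^c_n$. Consider the following generalized Brunner–Skrzypczyk (BS) protocol acting on two independent copies of an $n$-partite box shared by $n$ parties: party $i$ inputs $x_i$ into the first box and receives $a_i$; party $i$ then inputs $y_i=x_i\cdot(1\oplus a_i)$ into the second box and receives $b_i$; party $i$ outputs $c_i=a_i\oplus b_i$. The resulting map $\vec x\mapsto\vec c$ defines a new $n$-partite box. Then: (1) for every $0<\varepsilon<1$, applying the generalized BS protocol to two copies of $P^{PR}_{n,\varepsilon}$ yields a box $P^{PR}_{n,\varepsilon'}$ with $\varepsilon'>\varepsilon$; (2) for every $\varepsilon>0$, iterating the protocol (applying it to $2^m$ copies of $P^{PR}_{n,\varepsilon}$ recursively, pairing up the boxes obtained at each level) yields boxes $P^{PR}_{n,\varepsilon_m}$ with $\varepsilon_m\to 1$ as $m\to\infty$, i.e. $P^{PR}_{n,\varepsilon}$ is distilled arbitrarily closely to $P^{PR}_n$.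
   Context: An $n$-partite box is a conditional probability distribution $P(\vec a\mid \vec x)$ with $n$ binary inputs and $n$ binary outputs, party $i$ holding input $x_i$ and output $a_i$; boxes used in a protocol are independent copies, and inputs to the second box may depend on the outputs of the first box at the same party (local wiring). *)

From HB Require Import structures.
From mathcomp Require Import all_boot all_order all_algebra.
From mathcomp Require Import all_classical all_reals all_analysis.
Unset Printing Implicit Defensive.
Import Order.TTheory GRing.Theory Num.Theory.
Local Open Scope ring_scope.

Definition bvec (n : nat) := {ffun 'I_n -> bool}.

(* An n-partite box: P a x = P(a | x), outputs a, inputs x. *)
Definition box (R : realType) (n : nat) := bvec n -> bvec n -> R.

Definition parity {n} (a : bvec n) : bool := \big[addb/false]_(i < n) a i.
Definition allprod {n} (x : bvec n) : bool := [forall i, x i].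

Definition PR_box {R : realType} {n : nat} : box R n :=
  fun a x => if parity a == allprod x then ((2 ^+ (n.-1))%:R : R)^-1 else 0.

Definition even_box {R : realType} {n : nat} : box R n :=
  fun a x => if parity a == false then ((2 ^+ (n.-1))%:R : R)^-1 else 0.

Definition PR_eps {R : realType} {n : nat} (eps : R) : box R n :=
  fun a x => eps * PR_box a x + (1 - eps) * even_box a x.

Definition BS {R : realType} {n : nat} (P1 P2 : box R n) : box R n :=
  fun c x =>
    \sum_(a : bvec n) \sum_(b : bvec n)
      (if c == [ffun i => a i (+) b i] then
         P1 a x * P2 b [ffun i => x i && ~~ a i]
       else 0).

(* Level-m box from 2^m copies of P, pairing identical boxes at each level. *)
Definition BS_iter {R : realType} {n : nat} (P : box R n) (m : nat) : box R n :=
  iter m (fun Q => BS Q Q) P.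

From HB Require Import structures.
From mathcomp Require Import all_boot all_order all_algebra.
From mathcomp Require Import all_classical all_reals all_analysis.
From mathcomp Require Import ring lra.

Import Order.TTheory GRing.Theory Num.Theory numFieldNormedType.Exports.

Set Implicit Arguments.
Unset Strict Implicit.
Local Open Scope classical_set_scope.
Local Open Scope ring_scope.

(* The protocol only changes the weight on the PR component: with
   N = 2^(n-1), two copies of P_eps produce P_eps' with
   eps' = eps + eps (1 - eps) / N, because the second box receives the
   all-ones input exactly when the first outputs all zeros.  Hence
   1 - eps' = (1 - eps) (1 - eps / N), and since the weight only increases, the
   defect 1 - eps_m decays geometrically with ratio 1 - eps / N. *)

Definition bxor {n} (a b : bvec n) : bvec n := [ffun i => a i (+) b i].

Definition bmask {n} (x a : bvec n) : bvec n := [ffun i => x i && ~~ a i].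

Lemma parity_bxor n (a b : bvec n) : parity (bxor a b) = parity a (+) parity b.
Proof. by rewrite /parity /bxor; under eq_bigr do rewrite ffunE; exact: big_split. Qed.

Lemma parity0 n : parity ([ffun=> false] : bvec n) = false.
Proof. by rewrite /parity big1 // => i _; rewrite ffunE. Qed.

Lemma bxorK n (a : bvec n) : involutive (bxor a).
Proof. by move=> b; apply/ffunP => i; rewrite !ffunE addKb. Qed.

Lemma eq_bxor n (a b c : bvec n) : (c == bxor a b) = (b == bxor a c).
Proof. by apply/eqP/eqP => ->; rewrite bxorK. Qed.

Lemma allprod_bmask_false n (x a : bvec n) :
  allprod x = false -> allprod (bmask x a) = false.
Proof.
move=> /negbT /forallPn [i xi]; apply/negbTE/forallPn; exists i.
by rewrite ffunE (negbTE xi).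
Qed.

Lemma allprod_bmask_true n (x a : bvec n) :
  allprod x = true -> allprod (bmask x a) = (a == [ffun=> false]).
Proof.
move=> /forallP x1; apply/forallP/eqP => [ma1|->].
  by apply/ffunP => i; move: (ma1 i); rewrite !ffunE x1; case: (a i).
by move=> i; rewrite !ffunE x1.
Qed.

Lemma BS_diagE (R : realType) n (P : box R n) c x :
  BS P P c x = \sum_a P a x * P (bxor a c) (bmask x a).
Proof.
apply: eq_bigr => a _; under eq_bigr do rewrite eq_bxor.
by rewrite -big_mkcond big_pred1_eq.
Qed.

Lemma eq_BS_diag (R : realType) n (P Q : box R n) : P =2 Q -> BS P P =2 BS Q Q.
Proof. by move=> PQ c x; rewrite !BS_diagE; apply: eq_bigr => a _; rewrite !PQ. Qed.

Lemma sum_parity (R : realType) n (u v : R) : (0 < n)%N ->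
  \sum_(a : bvec n) (if parity a then u else v) = (2 ^+ n.-1)%:R * (u + v).
Proof.
move=> n_gt0; pose i0 : 'I_n := Ordinal n_gt0.
pose d : bvec n := [ffun i => i == i0].
have parity_d : parity d.
  by rewrite /parity (bigD1 i0) //= big1 ?ffunE ?eqxx // => i /negbTE; rewrite ffunE => ->.
set S := \sum_a _.
(* flipping one coordinate swaps the two parity classes *)
have S_swap : S = \sum_(a : bvec n) (if parity a then v else u).
  rewrite /S (reindex_inj (can_inj (bxorK d))).
  by apply: eq_bigr => a _; rewrite parity_bxor parity_d; case: (parity a).
have S_twice : S + S = (2 ^+ n)%:R * (u + v).
  rewrite {2}S_swap -big_split /= (eq_bigr (fun _ => u + v)); last first.
    by move=> a _; case: (parity a); rewrite // addrC.
  by rewrite sumr_const card_ffun card_bool card_ord mulr_natl -mulr_natl natrX.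
have N2 : (2 ^+ n)%:R = 2 * (2 ^+ n.-1)%:R :> R.
  by rewrite -(prednK n_gt0) natrX exprS natrX.
rewrite N2 in S_twice.
apply: (@mulfI _ 2); first by rewrite pnatr_eq0.
by rewrite mulrA -S_twice; ring.
Qed.

Lemma PR_epsE (R : realType) n (e : R) (b y : bvec n) :
  PR_eps e b y = ((2 ^+ n.-1)%:R)^-1 *
    (if parity b then (if allprod y then e else 0)
     else if allprod y then 1 - e else 1).
Proof.
by rewrite /PR_eps /PR_box /even_box; case: (parity b); case: (allprod y) => /=; ring.
Qed.

Definition gain (R : realType) (k e : R) : R := e + k * e * (1 - e).

Lemma BS_PR_eps (R : realType) n (e : R) : (0 < n)%N ->
  BS (@PR_eps R n e) (PR_eps e) =2 PR_eps (gain ((2 ^+ n.-1)%:R^-1) e).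
Proof.
move=> n_gt0 c x; set N := (2 ^+ n.-1)%:R : R.
have N_neq0 : N != 0 by rewrite pnatr_eq0 expn_eq0.
rewrite BS_diagE PR_epsE /gain -/N.
under eq_bigr do rewrite !PR_epsE parity_bxor -/N.
case x1: (allprod x); last first.
  under eq_bigr do rewrite allprod_bmask_false //.
  rewrite (eq_bigr (fun a => if parity a then 0
                            else if parity c then 0 else N^-1 * N^-1)); last first.
    by move=> a _; case: (parity a); case: (parity c) => /=; ring.
  by rewrite sum_parity // -/N; case: (parity c); field.
under eq_bigr do rewrite allprod_bmask_true //.
set z : bvec n := [ffun=> false].
rewrite (bigD1 z) //= parity0 eqxx.
pose G (a : bvec n) := N^-1 * (if parity a then e else 1 - e) *
   (N^-1 * (if parity a (+) parity c then 0 else 1)).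
(* away from a = 0 the second box sees a non-all-ones input *)
rewrite (eq_bigr G); last by move=> a /negbTE ->.
have -> : \sum_(a | a != z) G a = \sum_a G a - G z.
  by rewrite [X in _ = X - _](bigD1 z) //= addrC addrK.
rewrite /G parity0 /=.
rewrite (eq_bigr (fun a => if parity a then (if parity c then N^-1 * e * N^-1 else 0)
                          else if parity c then 0 else N^-1 * (1 - e) * N^-1)); last first.
  by move=> a _; case: (parity a); case: (parity c) => /=; ring.
by rewrite sum_parity // -/N; case: (parity c) => /=; field.
Qed.

Lemma BS_iter_PR_eps (R : realType) n (e : R) m : (0 < n)%N ->
  BS_iter (@PR_eps R n e) m =2 PR_eps (iter m (gain ((2 ^+ n.-1)%:R^-1)) e).
Proof.
move=> n_gt0; elim: m => [//|m IHm] c x.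
by rewrite /BS_iter iterS -/(BS_iter _ m) (eq_BS_diag IHm) BS_PR_eps.
Qed.

Section Gain.
Variables (R : realType) (k : R).
Hypotheses (k_gt0 : 0 < k) (k_le1 : k <= 1).

Lemma one_sub_gain (e : R) : 1 - gain k e = (1 - e) * (1 - k * e).
Proof. by rewrite /gain; ring. Qed.

Lemma gain_gt (e : R) : 0 < e < 1 -> e < gain k e.
Proof. by move=> /andP[e_gt0 e_lt1]; rewrite /gain ltrDl !mulr_gt0 // subr_gt0. Qed.

Lemma gain_ge_le1 (e : R) : 0 <= e <= 1 -> e <= gain k e <= 1.
Proof.
move=> /andP[e_ge0 e_le1]; have ke_le1 : k * e <= 1 by apply: mulr_ile1 => //; exact: ltW.
apply/andP; split; first by rewrite /gain lerDl !mulr_ge0 ?subr_ge0 // ltW.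
by rewrite -subr_ge0 one_sub_gain; nra.
Qed.

Lemma iter_gain_ge_le1 (e : R) m : 0 <= e <= 1 -> e <= iter m (gain k) e <= 1.
Proof.
move=> e01; elim: m => [|m /andP[e_le em_le1]] /=; first by rewrite lexx; case/andP: e01.
have em01 : 0 <= iter m (gain k) e <= 1 by case/andP: e01 => *; apply/andP; split; lra.
by have /andP[? ?] := gain_ge_le1 em01; apply/andP; split; lra.
Qed.

Lemma one_sub_iter_gain_le (e : R) m : 0 <= e <= 1 ->
  1 - iter m (gain k) e <= (1 - e) * (1 - k * e) ^+ m.
Proof.
move=> e01; elim: m => [|m IHm] /=; first by rewrite expr0 mulr1.
have /andP[e_le em_le1] := iter_gain_ge_le1 m e01.
have em_ge0 : 0 <= iter m (gain k) e by apply: le_trans e_le; case/andP: e01.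
have kem_le1 : k * iter m (gain k) e <= 1 by apply: mulr_ile1 => //; exact: ltW.
have ke_le : k * e <= k * iter m (gain k) e by rewrite ler_pM2l.
rewrite one_sub_gain exprS mulrCA [X in _ <= X]mulrC.
by apply: ler_pM => //; rewrite ?subr_ge0 // lerB.
Qed.

Lemma iter_gain_cvg (e : R) : 0 < e <= 1 -> iter m (gain k) e @[m --> \oo] --> (1 : R).
Proof.
move=> /andP[e_gt0 e_le1]; have e01 : 0 <= e <= 1 by apply/andP; split; lra.
have q_ge0 : 0 <= 1 - k * e by rewrite subr_ge0; apply: mulr_ile1 => //; exact: ltW.
have q_lt1 : 1 - k * e < 1 by rewrite ltrBlDr ltrDl mulr_gt0.
apply: (@squeeze_cvgr _ _ _ _ (fun m => 1 - (1 - e) * (1 - k * e) ^+ m) (cst 1)).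
- apply: nearW => m; have := one_sub_iter_gain_le m e01.
  by have /andP[] := iter_gain_ge_le1 m e01; move=> *; apply/andP; split => /=; lra.
- rewrite -[X in _ --> X]subr0; apply: cvgB; first exact: cvg_cst.
  rewrite -(mulr0 (1 - e)); apply: (cvgM (cvg_cst _)).
  by apply: cvg_expr; rewrite ger0_norm.
- exact: cvg_cst.
Qed.

End Gain.

Theorem theorem1 (R : realType) (n : nat) (hn : (2 <= n)%N) :
  (forall eps : R, 0 < eps < 1 ->
     exists eps' : R, [/\ eps < eps', eps' <= 1 &
       BS (@PR_eps R n eps) (@PR_eps R n eps) =2 @PR_eps R n eps'])
  /\
  (forall eps : R, 0 < eps <= 1 ->
     exists epsm : nat -> R,
       [/\ (forall m, 0 <= epsm m <= 1),
           (forall m, BS_iter (@PR_eps R n eps) m =2 @PR_eps R n (epsm m)) &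
           epsm m @[m --> \oo] --> (1 : R)]).
Proof.
have n_gt0 : (0 < n)%N by apply: leq_trans hn.
set k : R := (2 ^+ n.-1)%:R^-1.
have N_ge1 : 1 <= (2 ^+ n.-1)%:R :> R by rewrite ler1n expn_gt0.
have k_gt0 : 0 < k by rewrite invr_gt0 (lt_le_trans _ N_ge1).
have k_le1 : k <= 1 by rewrite invf_le1 // (lt_le_trans _ N_ge1).
split=> eps /andP[eps_gt0 eps_le1].
  have eps01 : 0 <= eps <= 1 by apply/andP; split; lra.
  exists (gain k eps); split; last exact: BS_PR_eps.
  - by apply: gain_gt => //; apply/andP.
  - by case/andP: (gain_ge_le1 k_gt0 k_le1 eps01).
have eps01 : 0 <= eps <= 1 by apply/andP; split; lra.
exists (fun m => iter m (gain k) eps); split.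
- move=> m; have /andP[? ?] := iter_gain_ge_le1 k_gt0 k_le1 m eps01.
  by apply/andP; split; lra.
- by move=> m; exact: BS_iter_PR_eps.
- by apply: iter_gain_cvg => //; apply/andP.
Qed.
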